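(* Let $I$ be an irreducible numerical semigroup. Then (1) the height of the tree $\mathrm{G}([\theta(I),I])$ equals $\#(I\setminus\theta(I))$; (2) if $S$ belongs to the $n$-level of $\mathrm{G}([\theta(I),I])$, then $\mathrm{l}(S)=2n+\mathrm{l}(I)$; (3) $\{\mathrm{l}(S)\mid S\in[\theta(I),I]\}=\{2n+\mathrm{l}(I)\mid n\in\{0,1,\ldots,\#(I\setminus\theta(I))\}\}$.
   Context: A numerical semigroup is a subset $S\subseteq\mathbb{N}$ closed under addition with $0\in S$ and $\mathbb{N}\setminus S$ finite; $\mathrm{F}(S)=\max(\mathbb{Z}\setminus S)$; $\langle X\rangle$ is the submonoid generated by $X$. Irreducible: not the intersection of two numerical semigroups properly containing it. $\mathrm{N}(S)=\{s\in S\mid s<\mathrm{F}(S)\}$, $\mathrm{L}(S)=\{x\in\mathbb{N}\setminus S\mid \mathrm{F}(S)-x\notin \mathrm{N}(S)\}$, $\mathrm{l}(S)=\#\mathrm{L}(S)$. $\Delta(S)=\{s\in S\mid s<\frac{\mathrm{F}(S)}{2}\}$ and $\theta(S)=\langle\Delta(S)\rangle\cup\{\mathrm{F}(S)+1,\mathrm{F}(S)+2,\ldots\}$. For numerical semigroups $A\subseteq B$, $[A,B]$ is the set of numerical semigroups $X$ with $A\subseteq X\subseteq B$; $\mathrm{F}_B(X)=\max(B\setminus X)$ if $X\subsetneq B$, $\mathrm{F}_B(B)=-1$. $\mathrm{G}([A,B])$ has vertex set $[A,B]$ and an edge $(X,Y)$ whenever $X\cup\{\mathrm{F}_B(X)\}=Y$;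 it is a rooted tree with root $B$. The depth of a vertex is the number of edges on its unique path to the root, the $n$-level is the set of vertices of depth $n$, and the height is the maximal depth. *)

From Stdlib Require Import ClassicalEpsilon.
From HB Require Import structures.
From mathcomp Require Import all_boot all_order all_algebra.
Set Implicit Arguments. Unset Strict Implicit. Unset Printing Implicit Defensive.
Import Order.TTheory GRing.Theory Num.Theory.

Definition nset := nat -> Prop.

Definition inZ (S : nset) (z : int) : Prop :=
  match z with Posz n => S n | Negz _ => False end.

Definition subset (A B : nset) : Prop := forall x, A x -> B x.
Definition seteq (A B : nset) : Prop := forall x, A x <-> B x.
Definition psubset (A B : nset) : Prop := subset A B /\ exists x, B x /\ ~ A x.

Definition finite_set (A : nset) : Prop := exists s : seq nat, forall x, A x -> x \in s.

Definition has_card (A : nset) (k : nat) : Prop :=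
  exists s : seq nat, uniq s /\ (forall x, x \in s <-> A x) /\ size s = k.
(* #A (meaningful for finite A) *)
Definition ncard (A : nset) : nat := epsilon (inhabits 0%N) (has_card A).

Definition is_ns (S : nset) : Prop :=
  S 0%N /\ (forall x y, S x -> S y -> S (x + y)%N) /\ finite_set (fun n => ~ S n).

Definition frob (S : nset) : int :=
  epsilon (inhabits 0%R) (fun f : int => ~ inZ S f /\ forall z : int, (f < z)%R -> inZ S z).

Definition irreducible_ns (S : nset) : Prop :=
  is_ns S /\
  ~ (exists S1 S2, is_ns S1 /\ is_ns S2 /\ psubset S S1 /\ psubset S S2 /\
       seteq S (fun x => S1 x /\ S2 x)).

Inductive gen (X : nset) : nset :=
| gen0 : gen X 0
| genS a x : X a -> gen X x -> gen X (a + x)%N.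

Definition NS (S : nset) : nset := fun s => S s /\ (Posz s < frob S)%R.
Definition LS (S : nset) : nset :=
  fun x => ~ S x /\ ~ inZ (NS S) (frob S - Posz x)%R.
Definition lS (S : nset) : nat := ncard (LS S).

(* Delta(S) = {s in S | s < F(S)/2}, i.e. 2s < F(S) *)
Definition Delta (S : nset) : nset := fun s => S s /\ (Posz (2 * s)%N < frob S)%R.
Definition theta (S : nset) : nset :=
  fun x => gen (Delta S) x \/ (frob S < Posz x)%R.

Definition ns_interval (A B : nset) (X : nset) : Prop := is_ns X /\ subset A X /\ subset X B.

Definition frobB (B X : nset) : int :=
  epsilon (inhabits (-1)%R) (fun f : int =>
    (seteq X B /\ f = (-1)%R) \/
    (psubset X B /\ inZ B f /\ ~ inZ X f /\
       forall z : int, (f < z)%R -> inZ B z -> inZ X z)).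

(* depth B X n : the unique path from X to the root B in G([A,B]) has n edges,
   edges being (X, X ∪ {F_B(X)}) *)
Inductive depth (B : nset) : nset -> nat -> Prop :=
| depth_root X : seteq X B -> depth B X 0
| depth_step X Y n :
    psubset X B ->
    seteq Y (fun y => X y \/ Posz y = frobB B X) ->
    depth B Y n -> depth B X n.+1.

Definition level (A B : nset) (n : nat) : nset -> Prop :=
  fun X => ns_interval A B X /\ depth B X n.

Definition is_height (A B : nset) (h : nat) : Prop :=
  (exists X, level A B h X) /\
  (forall X d, ns_interval A B X -> depth B X d -> (d <= h)%N).

Definition setdiff (A B : nset) : nset := fun x => A x /\ ~ B x.

From Pilot Require Import Defs.
From Stdlib Require Import ClassicalEpsilon.
From mathcomp Require Import all_boot all_order all_algebra zify.
Set Implicit Arguments. Unset Strict Implicit. Unset Printing Implicit Defensive.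
Import Order.TTheory GRing.Theory Num.Theory.

(* Let f = F(I). Every S in [theta(I), I] contains all integers above f and misses f,
   so F(S) = f, and L(S) is the set of x <= f with x and f - x both outside S.
   The parent of S in the tree is S u {g} with g = max (I \ S), so the depth of S is
   #(I \ S), and every value between 0 and #(I \ theta(I)) occurs along the path from
   theta(I) to the root. Going down from S u {g} to S adds exactly g and f - g to L:
   g <= f, and f - g is not even in I since f = g + (f - g) is a gap of I.
   Hence l(S) = l(I) + 2 #(I \ S). *)

Lemma has_card_unique A k1 k2 : has_card A k1 -> has_card A k2 -> k1 = k2.
Proof.
move=> [s1 [u1 [m1 <-]]] [s2 [u2 [m2 <-]]].
apply/eqP; rewrite eqn_leq; apply/andP; split; apply: uniq_leq_size => // x.
- by move/m1/m2.
- by move/m2/m1.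
Qed.

Lemma ncardE A k : has_card A k -> ncard A = k.
Proof. by move=> Ak; apply: (has_card_unique _ Ak); apply: epsilon_spec; exists k. Qed.

Lemma has_card_ext A B k : seteq A B -> has_card A k -> has_card B k.
Proof. by move=> AB [s [u [m <-]]]; exists s; split=> //; split=> // x; rewrite m. Qed.

Lemma has_card_setU1 A k x :
  has_card A k -> ~ A x -> has_card (fun y => A y \/ y = x) k.+1.
Proof.
move=> [s [u [m <-]]] nAx; exists (x :: s); split; [|split] => //=.
- by rewrite u andbT; apply/negP => /m.
- move=> y; rewrite in_cons; split.
  + by case/orP => [/eqP -> | /m]; [right | left].
  + by case=> [/m -> | ->]; rewrite ?orbT ?eqxx.
Qed.

Lemma has_card_setD1 A k x :
  has_card A k.+1 -> A x -> has_card (fun y => A y /\ y <> x) k.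
Proof.
move=> [s [u [m sz]]] Ax; have xs : x \in s by apply/m.
exists (rem x s); split; [exact: rem_uniq | split].
- move=> y; rewrite (mem_rem_uniq _ u) inE; split.
  + by case/andP => /eqP ne /m.
  + by case=> /m -> /eqP ->.
- by rewrite size_rem // sz.
Qed.

Lemma has_card0 A : (forall x, ~ A x) -> has_card A 0.
Proof. by move=> nA; exists [::]; split=> //; split=> // x; split=> // /nA. Qed.

Lemma has_card0_empty A x : has_card A 0 -> ~ A x.
Proof. by move=> [[|??] [u [m sz]]] // /m. Qed.

Lemma has_cardS_inhabited A k : has_card A k.+1 -> exists x, A x.
Proof. by move=> [[|y s] [u [m sz]]] //; exists y; apply/m; rewrite inE eqxx. Qed.

Lemma has_card_leq A B a b :
  Defs.subset A B -> has_card A a -> has_card B b -> (a <= b)%N.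
Proof.
move=> sAB [s1 [u1 [m1 <-]]] [s2 [u2 [m2 <-]]].
by apply: uniq_leq_size => // x /m1 /sAB /m2.
Qed.

Lemma has_cardS_max A k :
  has_card A k.+1 -> exists m, A m /\ forall n, A n -> (n <= m)%N.
Proof.
elim: k A => [|k IH] A Ak; have [x Ax] := has_cardS_inhabited Ak;
  have Ak' := has_card_setD1 Ak Ax.
- exists x; split=> // n An; case: (n =P x) => [-> // | nx].
  by case: (has_card0_empty Ak' (conj An nx)).
- have [m [[Am _] Hm]] := IH _ Ak'.
  have le_x_m n : A n -> (n <= x \/ n <= m)%N.
    by move=> An; case: (n =P x) => [->|nx]; [left | right; apply: Hm].
  by case: (leqP x m) => le; [exists m | exists x]; split=> // n /le_x_m; lia.
Qed.

Lemma has_card_finite A k : has_card A k -> finite_set A.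
Proof. by case=> s [_ [m _]]; exists s => x /m. Qed.

Lemma finite_subset A B : Defs.subset A B -> finite_set B -> finite_set A.
Proof. by move=> sAB [s Bs]; exists s => x /sAB /Bs. Qed.

Lemma bounded_finite A N : (forall n, A n -> (n < N)%N) -> finite_set A.
Proof. by move=> AN; exists (iota 0 N) => x /AN; rewrite mem_iota. Qed.

Lemma finite_bounded A : finite_set A -> exists N, forall n, A n -> (n < N)%N.
Proof.
move=> [s As]; exists (\max_(x <- s) x).+1 => n /As ns.
by rewrite ltnS; apply: (leq_bigmax_seq (F := id)).
Qed.

Lemma finite_has_card A : finite_set A -> exists k, has_card A k.
Proof.
move=> [s]; elim: s A => [|x s IH] A As.
  by exists 0; apply: has_card0 => y /As.
have [k Ak] : exists k, has_card (fun y => A y /\ y <> x) k.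
  apply: IH => y [/As]; rewrite in_cons => /orP [/eqP -> //|//].
case: (classic (A x)) => Ax; [exists k.+1 | exists k].
- apply: has_card_ext (has_card_setU1 Ak (x := x) _); last by case.
  by move=> y; split=> [[[]|->] // | Ay]; case: (y =P x); [right | left].
- apply: has_card_ext Ak => y; split=> [[] // | Ay]; split=> // yx.
  by apply: Ax; rewrite -yx.
Qed.

Definition nsetU1 (X : nset) (g : nat) : nset := fun y => X y \/ y = g.

Lemma setdiff_card_nsetU1 B X g k : B g -> ~ X g ->
  has_card (setdiff B X) k.+1 <-> has_card (setdiff B (nsetU1 X g)) k.
Proof.
move=> Bg nXg; split=> card.
- apply: has_card_ext (has_card_setD1 card (conj Bg nXg)) => y; split.
  + by move=> [[By nXy] yg]; split=> // -[].
  + move=> [By nXgy]; split; first by split=> // Xy; apply: nXgy; left.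
    by move=> yg; apply: nXgy; right.
- apply: has_card_ext (has_card_setU1 card (x := g) _); last by move=> [_]; apply; right.
  move=> y; split=> [[[By nXgy] | ->] | [By nXy]]; first by split=> // Xy; apply: nXgy; left.
  + by [].
  + by case: (y =P g) => [-> | yg]; [right | left; split=> // -[]].
Qed.

Lemma setdiff_card0 B X : Defs.subset X B -> has_card (setdiff B X) 0 -> seteq X B.
Proof.
move=> sXB card x; split=> [/sXB // | Bx].
by case: (classic (X x)) => // nXx; case: (has_card0_empty card (conj Bx nXx)).
Qed.

Lemma gen_addn X x y : gen X x -> gen X y -> gen X (x + y)%N.
Proof.
elim=> [|a x' Xa _ IH] gy; first by rewrite add0n.
by rewrite -addnA; apply: genS => //; apply: IH.
Qed.

Lemma gen_subset X S : Defs.subset X S -> is_ns S -> Defs.subset (gen X) S.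
Proof. by move=> sXS [S0 [SD _]] x; elim=> // a y Xa _; apply: SD; apply: sXS. Qed.

Lemma ns_cofinite S : is_ns S -> exists N, forall n, (N <= n)%N -> S n.
Proof.
move=> [_ [_ /finite_bounded [N HN]]]; exists N => n le.
by case: (classic (S n)) => // /HN; lia.
Qed.

Definition is_frob (S : nset) (f : int) : Prop :=
  ~ inZ S f /\ forall z : int, (f < z)%R -> inZ S z.

Lemma frob_exists S : is_ns S -> exists f, is_frob S f.
Proof.
move=> /ns_cofinite [N]; elim: N => [|N IH] SN.
  by exists (Negz 0); split=> // -[n|k] lt /=; [apply: SN | ]; lia.
case: (classic (S N)) => SNN; last first.
  by exists (Posz N); split=> // -[n|k] lt /=; [apply: SN | ]; lia.
by apply: IH => n le; case: (n =P N) => [-> // | ?]; apply: SN; lia.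
Qed.

Lemma frobP S : is_ns S -> is_frob S (frob S).
Proof. by move=> /frob_exists; apply: epsilon_spec. Qed.

Lemma frob_unique S f : is_frob S f -> frob S = f.
Proof.
move=> [nSf Sf]; have [nSF SF] : is_frob S (frob S).
  by apply: epsilon_spec; exists f.
by case: (ltgtP (frob S) f) => // [/SF | /Sf].
Qed.

Lemma frobB_max B X : Defs.subset X B -> finite_set (setdiff B X) ->
  (exists x, setdiff B X x) ->
  exists g, [/\ frobB B X = Posz g, B g, ~ X g & forall n, (g < n)%N -> B n -> X n].
Proof.
move=> sXB /finite_has_card [[|k] card] [x BXx].
  by case: (has_card0_empty card BXx).
have [m [[Bm nXm] max_m]] := has_cardS_max card.
have : (seteq X B /\ frobB B X = (-1)%R) \/
    (psubset X B /\ inZ B (frobB B X) /\ ~ inZ X (frobB B X) /\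
       forall z : int, (frobB B X < z)%R -> inZ B z -> inZ X z).
  pattern (frobB B X); apply: epsilon_spec; exists (Posz m); right.
  split; first by split=> //; exists m.
  do 2!split=> //; move=> [n|k'] //= lt Bn.
  by case: (classic (X n)) => // nXn; have := max_m n (conj Bn nXn); lia.
case=> [[XB _] | [_ []]]; first by case: BXx => /XB.
case: (frobB B X) => [g|?] //= Bg [nXg max_g].
by exists g; split=> // n lt Bn; apply: (max_g (Posz n)) => //; rewrite ltz_nat.
Qed.

Lemma frobB_nsetU1 B X g : frobB B X = Posz g ->
  seteq (fun y => X y \/ Posz y = frobB B X) (nsetU1 X g).
Proof.
by move=> -> y; split=> -[? | E]; [left | right; case: E | left | right; rewrite E].
Qed.

Lemma ns_nsetU1_max B X g : is_ns B -> is_ns X -> Defs.subset X B -> B g -> ~ X g ->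
  (forall n, (g < n)%N -> B n -> X n) -> is_ns (nsetU1 X g).
Proof.
move=> [_ [BD _]] [X0 [XD Xfin]] sXB Bg nXg max_g.
have g_gt0 : (0 < g)%N by case: g nXg {Bg max_g}.
split; [by left | split]; last first.
  by apply: finite_subset Xfin => n nXgn Xn; apply: nXgn; left.
have sum_gt n m : B n -> B m -> (g < n + m)%N -> nsetU1 X g (n + m).
  by move=> Bn Bm lt; left; apply: max_g => //; apply: BD.
move=> x y [Xx | ->] [Xy | ->]; first by left; apply: XD.
- case: x Xx => [|x] Xx; first by right.
  by apply: sum_gt => //; [apply: sXB | lia].
- case: y Xy => [|y] Xy; first by right; rewrite addn0.
  by apply: sum_gt => //; [apply: sXB | lia].
- by apply: sum_gt => //; lia.
Qed.

Lemma frobB_step B X k : is_ns B -> is_ns X -> Defs.subset X B ->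
  has_card (setdiff B X) k.+1 ->
  exists g, [/\ B g, ~ X g, is_ns (nsetU1 X g) & has_card (setdiff B (nsetU1 X g)) k].
Proof.
move=> nsB nsX sXB card.
have [g [_ Bg nXg max_g]] :=
  frobB_max sXB (has_card_finite card) (has_cardS_inhabited card).
exists g; split=> //; first exact: (ns_nsetU1_max nsB nsX sXB Bg nXg max_g).
exact/(setdiff_card_nsetU1 _ Bg nXg).
Qed.

Lemma depth_has_card B X n : Defs.subset X B -> finite_set (setdiff B X) ->
  depth B X n -> has_card (setdiff B X) n.
Proof.
move=> + + dX; elim: dX => {X n} [X XB | X Y n [_ BXx] YE _ IH] sXB fin.
  by apply: has_card0 => x [Bx []]; apply/XB.
have [g [frobBg Bg nXg _]] := frobB_max sXB fin BXx.
have YXg : seteq Y (nsetU1 X g).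
  by move=> y; rewrite YE; apply: frobB_nsetU1.
have sYB : Defs.subset Y B by move=> y /YXg [/sXB | ->].
have finY : finite_set (setdiff B Y).
  by apply: finite_subset fin => y [By nYy]; split=> // Xy; apply/nYy/YXg; left.
apply/(setdiff_card_nsetU1 _ Bg nXg); apply: has_card_ext (IH sYB finY) => y.
by split=> -[By nYy]; split=> // /YXg.
Qed.

Lemma has_card_depth B X n : Defs.subset X B -> has_card (setdiff B X) n -> depth B X n.
Proof.
elim: n X => [|n IH] X sXB card; first exact/depth_root/setdiff_card0.
have [g [frobBg Bg nXg _]] :=
  frobB_max sXB (has_card_finite card) (has_cardS_inhabited card).
apply: (@depth_step _ _ (nsetU1 X g)).
- by split=> //; exact: has_cardS_inhabited card.
- by move=> y; symmetry; apply: frobB_nsetU1.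
- apply: IH; first by move=> y [/sXB | ->].
  exact/(setdiff_card_nsetU1 _ Bg nXg).
Qed.

Lemma intermediate_ns_card B X n k : is_ns B -> is_ns X -> Defs.subset X B ->
  has_card (setdiff B X) n -> (k <= n)%N ->
  exists Z, [/\ is_ns Z, Defs.subset X Z, Defs.subset Z B & has_card (setdiff B Z) k].
Proof.
move=> nsB; elim: n X => [|n IH] X nsX sXB card le_kn.
  by move: le_kn; rewrite leqn0 => /eqP ->; exists X; split=> // x.
case: (k =P n.+1) => [-> | kn]; first by exists X; split=> // x.
have [g [Bg _ nsXg cardXg]] := frobB_step nsB nsX sXB card.
have sXgB : Defs.subset (nsetU1 X g) B by move=> y [/sXB | ->].
have [|Z [nsZ sXgZ sZB cardZ]] := IH _ nsXg sXgB cardXg; first by lia.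
by exists Z; split=> // y Xy; apply: sXgZ; left.
Qed.

Lemma theta_subset I : is_ns I -> Defs.subset (theta I) I.
Proof.
move=> nsI x [genx | lt]; last by have [_ IF] := frobP nsI; exact: (IF (Posz x)).
by apply: gen_subset genx => // a [].
Qed.

Lemma theta_ns I : is_ns I -> is_ns (theta I).
Proof.
move=> nsI; have [nIF _] := frobP nsI; have [N IN] := ns_cofinite nsI.
have F_lt_N : (frob I < Posz N)%R.
  move: nIF; case: (frob I) => [m|k] /= nIm; last by lia.
  by rewrite ltz_nat; case: (ltnP m N) => // /IN.
split; [by left; constructor | split].
- by move=> x y [gx | ltx] [gy | lty]; [left; apply: gen_addn | right; lia ..].
- apply: (bounded_finite (N := N)) => n nTn.
  by case: (ltnP n N) => // le; case: nTn; right; lia.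
Qed.

Definition Lgaps (f : nat) (S : nset) : nset :=
  fun x => (x <= f)%N /\ ~ S x /\ ~ S (f - x)%N.

Lemma Lgaps_nsetU1 f S g k : (g <= f)%N -> ~ S g -> ~ S (f - g)%N -> g <> (f - g)%N ->
  has_card (Lgaps f (nsetU1 S g)) k -> has_card (Lgaps f S) k.+2.
Proof.
move=> le_gf nSg nSfg neq card.
have nLg : ~ Lgaps f (nsetU1 S g) g by move=> [_ [nSgg _]]; apply: nSgg; right.
have nLfg : ~ (Lgaps f (nsetU1 S g) (f - g)%N \/ (f - g)%N = g).
  by case=> [[_ [_]] | /esym //]; rewrite subKn // => nSgg; apply: nSgg; right.
have := has_card_setU1 (has_card_setU1 card nLg) (x := (f - g)%N) nLfg.
apply: has_card_ext => y.
rewrite /Lgaps /nsetU1; split.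
- case=> [[[le [nSy nSfy]] | ->] | ->].
  + by split=> //; split=> ?; [apply: nSy | apply: nSfy]; left.
  + by [].
  + by split; [lia | rewrite subKn].
- move=> [le [nSy nSfy]].
  case: (y =P g) => [-> | yg]; first by left; right.
  case: (y =P (f - g)%N) => [-> | yfg]; first by right.
  left; left; split=> //; split=> -[// | E]; first exact: yg.
  by apply: yfg; rewrite -E subKn.
Qed.

Section Interval.

Variables A I : nset.
Hypotheses (nsI : is_ns I) (sAI : Defs.subset A I).
Hypothesis A_above_frob : forall n, (frob I < Posz n)%R -> A n.

Lemma frob_interval S : ns_interval A I S -> frob S = frob I.
Proof.
move=> [_ [sAS sSI]]; have [nIF IF] := frobP nsI.
apply: frob_unique; split.
- by move: nIF; case: (frob I) => [m|k] //= nIm /sSI.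
- by move=> [n|k] lt /=; [apply/sAS/A_above_frob | exact: IF _ lt].
Qed.

Section PositiveFrobenius.

Variable f : nat.
Hypothesis frobI : frob I = Posz f.

Lemma Lgaps_LS S : ns_interval A I S -> seteq (Lgaps f S) (LS S).
Proof.
move=> intS; have [[S0 _] [sAS _]] := intS.
move=> x; rewrite /LS /Lgaps /NS frob_interval // frobI; split.
- by move=> [le [nSx nSfx]]; split=> //; rewrite subzn //= => -[].
- move=> [nSx nN]; have le_xf : (x <= f)%N.
    by case: (leqP x f) => // lt; case: nSx; apply/sAS/A_above_frob; rewrite frobI ltz_nat.
  split=> //; split=> // Sfx; apply: nN; rewrite subzn //=; split=> //.
  by rewrite ltz_nat; case: x nSx le_xf {Sfx} => [|x] nSx le; [| lia].
Qed.

Lemma not_mem_frob_subn g : I g -> (g <= f)%N -> ~ I (f - g)%N.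
Proof.
move=> Ig le_gf Ifg; have [nIf _] := frobP nsI; rewrite frobI /= in nIf.
by apply: nIf; rewrite -(subnKC le_gf); apply: nsI.2.1.
Qed.

Lemma has_card_Lgaps lI k S : has_card (Lgaps f I) lI ->
  ns_interval A I S -> has_card (setdiff I S) k -> has_card (Lgaps f S) (2 * k + lI).
Proof.
move=> cardI; elim: k S => [|k IH] S [nsS [sAS sSI]] card.
  by have SI := setdiff_card0 sSI card; apply: has_card_ext cardI => x; rewrite /Lgaps !SI.
have [g [Ig nSg nsSg cardSg]] := frobB_step nsI nsS sSI card.
have le_gf : (g <= f)%N.
  by case: (leqP g f) => // lt; case: nSg; apply/sAS/A_above_frob; rewrite frobI ltz_nat.
have nIfg := not_mem_frob_subn Ig le_gf.
have -> : (2 * k.+1 + lI = (2 * k + lI).+2)%N by lia.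
apply: Lgaps_nsetU1 le_gf nSg (fun Sfg => nIfg (sSI _ Sfg)) _ _.
- by move=> E; apply: nIfg; rewrite -E.
- apply: IH cardSg; split=> //; split; first by move=> y /sAS; left.
  by move=> y [/sSI | ->].
Qed.

End PositiveFrobenius.

Lemma lS_interval S k : ns_interval A I S -> has_card (setdiff I S) k ->
  lS S = (2 * k + lS I)%N.
Proof.
move=> intS card; have intI : ns_interval A I I by split=> //; split=> // x.
case frobI: (frob I) => [f|j].
  have lSE X c : ns_interval A I X -> has_card (Lgaps f X) c -> lS X = c.
    by move=> intX /(has_card_ext (Lgaps_LS frobI intX)) /ncardE.
  have [lI cardI] : exists lI, has_card (Lgaps f I) lI.
    by apply/finite_has_card/(bounded_finite (N := f.+1)) => n [].
  by rewrite (lSE _ _ intI cardI) (lSE _ _ intS (has_card_Lgaps frobI cardI intS card)).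
(* F(I) < 0, so A = I = S = N and both sides vanish. *)
have A_all n : A n by apply: A_above_frob; rewrite frobI.
have lS0 X : Defs.subset A X -> lS X = 0.
  by move=> sAX; apply/ncardE/has_card0 => x [nXx _]; apply/nXx/sAX.
have -> : k = 0.
  by apply: (has_card_unique card); apply: has_card0 => x [_]; apply; apply/intS.2.1.
by rewrite !lS0 //; case: intS => _ [].
Qed.

End Interval.

Theorem proposition32 (I : nset) (hI : irreducible_ns I) :
  is_height (theta I) I (ncard (setdiff I (theta I))) /\
  (forall (S : nset) (n : nat), level (theta I) I n S -> lS S = (2 * n + lS I)%N) /\
  (forall m : nat,
     (exists S, ns_interval (theta I) I S /\ lS S = m) <->
     (exists n : nat, (n <= ncard (setdiff I (theta I)))%N /\ m = (2 * n + lS I)%N)).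
Proof.
have nsI := hI.1.
have nsT := theta_ns nsI; have sTI := theta_subset nsI.
have T_above n : (frob I < Posz n)%R -> theta I n by right.
have lS_int := lS_interval nsI sTI T_above.
have finD X : is_ns X -> finite_set (setdiff I X).
  by move=> [_ [_ finX]]; apply: finite_subset finX => x [].
have [h cardT] := finite_has_card (finD _ nsT); rewrite (ncardE cardT).
have card_le X k : Defs.subset (theta I) X -> has_card (setdiff I X) k -> (k <= h)%N.
  by move=> sTX cardX; apply: has_card_leq cardX cardT => x [Ix nXx]; split=> // /sTX.
split; [split | split].
- exists (theta I); split; first by split=> //; split=> // x.
  exact: has_card_depth.
- move=> X d [nsX [sTX sXI]] dX.
  exact: card_le sTX (depth_has_card sXI (finD _ nsX) dX).
- move=> S n [intS dS]; apply: lS_int => //.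
  exact: depth_has_card intS.2.2 (finD _ intS.1) dS.
- move=> m; split.
  + move=> [S [intS <-]]; have [k cardS] := finite_has_card (finD _ intS.1).
    by exists k; split; [exact: card_le intS.2.1 cardS | exact: lS_int].
  + move=> [n [le_nh ->]].
    have [Z [nsZ sTZ sZI cardZ]] := intermediate_ns_card nsI nsT sTI cardT le_nh.
    by exists Z; split; [| exact: lS_int].
Qed.
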